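(* Let $\mathcal{G}=(\mathcal{V},\mathcal{E})$ and $\tilde{\mathcal{G}}=(\tilde{\mathcal{V}},\tilde{\mathcal{E}})$ be reaction networks such that $\mathcal{G}\sqsubseteq\tilde{\mathcal{G}}$. If $\tilde{\mathcal{G}}$ is endotactic, then $\mathcal{G}$ is endotactic. Moreover, if $\tilde{\mathcal{G}}$ is strongly endotactic, then $\mathcal{G}$ is strongly endotactic.
   Context: A reaction network (E-graph) $\mathcal{G}=(\mathcal{V},\mathcal{E})$ is a finite directed graph whose nodes are distinct elements of a finite set $Y\subset\mathbb{R}^d_{\ge 0}$, with $\mathcal{V}\neq\emptyset$, every node incident to at least one edge, and no edge from a node to itself. For an edge $e$, $\mathbf{s}(e)$ is its source node, $\mathbf{t}(e)$ its target, $\mathbf{v}(e)=\mathbf{t}(e)-\mathbf{s}(e)$. Given positive rate constants $\mathcal{K}=(k_e)$, $\mathcal{G}$ generates $\mathbf{f}_{\mathcal{G}(\mathcal{K})}(\mathbf{x})=\sum_{e}k_e\mathbf{x}^{\mathbf{s}(e)}\mathbf{v}(e)$ ($\mathbf{x}^{\mathbf{y}}=\prod_i x_i^{y_i}$, $0^0=1$). $\mathcal{G}\sqsubseteq\tilde{\mathcal{G}}$ means: for every positive rate constants $\mathcal{K}$ for $\mathcal{G}$ there exist positive rate constants $\tilde{\mathcal{K}}$ for $\tilde{\mathcal{G}}$ with $\mathbf{f}_{\tilde{\mathcal{G}}(\tilde{\mathcal{K}})}=\mathbf{f}_{\mathcal{G}(\mathcal{K})}$ identically. $\mathcal{G}$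 is endotactic if for every $\mathbf{w}\in\mathbb{R}^d$ and $e_i\in\mathcal{E}$ with $\mathbf{w}\cdot\mathbf{v}(e_i)<0$ there exists $e_j\in\mathcal{E}$ with $\mathbf{w}\cdot(\mathbf{s}(e_j)-\mathbf{s}(e_i))<0$ and $\mathbf{w}\cdot\mathbf{v}(e_j)>0$. It is strongly endotactic if moreover such $e_j$ can always be chosen so that additionally $\mathbf{w}\cdot(\mathbf{s}(e_j)-\mathbf{s}(e_k))\le 0$ for all $e_k\in\mathcal{E}$. *)

From HB Require Import structures.
From mathcomp Require Import all_boot all_order all_algebra.
From mathcomp Require Import all_classical all_reals.
From mathcomp Require Import exp.
Set Implicit Arguments. Unset Strict Implicit. Unset Printing Implicit Defensive.
Import Order.TTheory GRing.Theory Num.Theory.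
Local Open Scope ring_scope.

Section RN.
Variables (R : realType) (d : nat).

Notation vec := 'rV[R]_d.

(* An edge is a (source, target) pair; a reaction network is given by its
   duplicate-free list of edges (nodes = endpoints of edges, so every node is
   incident to an edge). *)
Definition edge := (vec * vec)%type.
Definition src (e : edge) : vec := e.1.
Definition tgt (e : edge) : vec := e.2.
Definition rvec (e : edge) : vec := tgt e - src e.

Definition dot (w v : vec) : R := \sum_(i < d) w 0 i * v 0 i.

Definition nonneg_vec (y : vec) : Prop := forall i, 0 <= y 0 i.

Definition is_network (E : seq edge) : Prop :=
  [/\ E != [::], uniq E,
      forall e, e \in E -> src e != tgt e &
      forall e, e \in E -> nonneg_vec (src e) /\ nonneg_vec (tgt e)].

(* x^y = prod_i x_i^{y_i}, with 0^0 = 1 (powR convention) *)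
Definition monom (x y : vec) : R := \prod_(i < d) powR (x 0 i) (y 0 i).

Definition rates_pos (E : seq edge) (k : edge -> R) : Prop :=
  forall e, e \in E -> 0 < k e.

Definition ma_field (E : seq edge) (k : edge -> R) (x : vec) : vec :=
  \sum_(e <- E) (k e * monom x (src e)) *: rvec e.

Definition realizable_by (E Et : seq edge) : Prop :=
  forall k, rates_pos E k ->
    exists kt, rates_pos Et kt /\
      forall x, nonneg_vec x -> ma_field Et kt x = ma_field E k x.

Definition endotactic (E : seq edge) : Prop :=
  forall (w : vec) ei, ei \in E -> dot w (rvec ei) < 0 ->
    exists ej, [/\ ej \in E, dot w (src ej - src ei) < 0 & dot w (rvec ej) > 0].

Definition strongly_endotactic (E : seq edge) : Prop :=
  forall (w : vec) ei, ei \in E -> dot w (rvec ei) < 0 ->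
    exists ej, [/\ ej \in E, dot w (src ej - src ei) < 0, dot w (rvec ej) > 0 &
                   forall ek, ek \in E -> dot w (src ej - src ek) <= 0].

End RN.

(* Evaluating the mass-action field at the points x = exp (n w), n = 0, 1, 2, ...,
   turns its u-component into a power sum in n whose bases are the numbers
   expR (w . s(e)).  Power sums determine the total coefficient of each base, so
   realizability preserves, for every level c and direction u, the flux
   sum_{w . s(e) = c} k_e u . v(e).  Rates making one edge dominate its level thus
   move a w-decreasing edge of G to an edge of G~ at the same level, and every
   source level of G is one of G~.  Conversely, a level of G~ whose edges are all
   w-nondecreasing, one of them increasing, moves back to G.  (Strong)
   endotacticity of G~ provides such a level below (at the minimum of) the
   sources, hence the edge of G asked for. *)

From mathcomp Require Import all_boot all_order all_algebra.
From mathcomp Require Import all_classical all_reals.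
From mathcomp Require Import sequences exp lra.
Import Order.TTheory GRing.Theory Num.Theory.
Local Open Scope ring_scope.

Set Implicit Arguments. Unset Strict Implicit.

Section PowerSums.
Variable F : idomainType.

Lemma power_sums_eq0 (s : seq (F * F)) :
  (forall n, \sum_(p <- s) p.2 * p.1 ^+ n = 0) ->
  forall x, \sum_(p <- s | p.1 == x) p.2 = 0.
Proof.
move=> hs x; pose P := \prod_(p <- s | p.1 != x) ('X - p.1%:P).
have P_vanish q : q \in s -> q.1 != x -> P.[q.1] = 0.
  move=> qs qx; apply/eqP; rewrite horner_prod prodf_seq_eq0.
  by apply/hasP; exists q; rewrite // qx hornerXsubC subrr eqxx.
have Px_neq0 : P.[x] != 0.
  rewrite horner_prod prodf_seq_neq0; apply/allP => q _.
  by apply/implyP => qx; rewrite hornerXsubC subr_eq0 eq_sym.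
have : \sum_(p <- s) p.2 * P.[p.1] = 0.
  under eq_bigr => p _ do rewrite horner_coef mulr_sumr.
  rewrite exchange_big big1 // => i _.
  by under eq_bigr => p _ do rewrite mulrCA; rewrite -mulr_sumr hs mulr0.
have -> : \sum_(p <- s) p.2 * P.[p.1] = (\sum_(p <- s | p.1 == x) p.2) * P.[x].
  rewrite mulr_suml [RHS]big_mkcond; apply: eq_big_seq => p ps /=.
  by case: eqP => [<- // | /eqP px]; rewrite P_vanish ?mulr0.
by move/eqP; rewrite mulf_eq0 (negPf Px_neq0) orbF => /eqP.
Qed.

End PowerSums.

Section WeightedSums.
Variables (R : realFieldType) (T : eqType).
Implicit Types (r : seq T) (P : pred T) (f : T -> R).

Lemma sumr_lt0_witness r P f :
  \sum_(i <- r | P i) f i < 0 -> exists2 i, i \in r & P i && (f i < 0).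
Proof.
have [/hasP //|/hasPn hn] := boolP (has (fun i => P i && (f i < 0)) r).
rewrite big_seq_cond ltNge sumr_ge0 // => i /andP[ir Pi].
by move: (hn i ir); rewrite Pi -leNgt.
Qed.

Lemma sumr_gt0_witness r P f :
  0 < \sum_(i <- r | P i) f i -> exists2 i, i \in r & P i && (0 < f i).
Proof.
rewrite -oppr_lt0 -sumrN => /sumr_lt0_witness[i ir /andP[Pi]].
by rewrite oppr_lt0 => fi; exists i; rewrite ?Pi.
Qed.

Lemma exists_weights_sum_lt0 r P f i0 :
  uniq r -> i0 \in r -> P i0 -> f i0 < 0 ->
  exists2 k : T -> R, forall i, i \in r -> 0 < k i &
    \sum_(i <- r | P i) k i * f i < 0.
Proof.
move=> r_uniq i0r Pi0 fi0; set S := \sum_(i <- r | i != i0) (if P i then f i else 0).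
pose M := (`|S| + 1) / - f i0.
have M_gt0 : 0 < M by rewrite divr_gt0 ?oppr_gt0 // ltr_pwDr.
exists (fun i => if i == i0 then M else 1) => [i _|]; first by case: eqP.
rewrite big_mkcond (bigD1_seq i0) //= eqxx Pi0.
rewrite (eq_bigr (fun i => if P i then f i else 0)) -/S => [|i /negPf ->]; last first.
  by case: (P i); rewrite ?mul1r.
have : M * - f i0 = `|S| + 1 by rewrite divfK // oppr_eq0 lt_eqF.
by have := ler_norm S; lra.
Qed.

End WeightedSums.

Section SeqArgmin.
Variables (disp : Order.disp_t) (O : orderType disp) (T : eqType).

Lemma exists_argmin_seq (r : seq T) (f : T -> O) :
  r != [::] -> exists2 i, i \in r & forall j, j \in r -> (f i <= f j)%O.
Proof.
elim: r => [//|a [|b r] IH] _.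
  by exists a => [|j]; rewrite ?mem_head // inE => /eqP ->.
have [m mr hm] := IH isT; have [fam|fma] := leP (f a) (f m).
- exists a => [|j]; first exact: mem_head.
  by rewrite inE => /orP[/eqP -> // | /hm]; apply: le_trans.
- exists m => [|j]; first by rewrite inE mr orbT.
  by rewrite inE => /orP[/eqP -> | /hm //]; apply: ltW.
Qed.

End SeqArgmin.

Section Networks.
Variables (R : realType) (d : nat).
Local Notation vec := 'rV[R]_d.
Local Notation edge := (edge R d).
Implicit Types (E Et L : seq edge) (k : edge -> R) (u v w y : vec).

Lemma dot_sumr (I : Type) (r : seq I) (F : I -> vec) u :
  dot u (\sum_(i <- r) F i) = \sum_(i <- r) dot u (F i).
Proof.
rewrite /dot exchange_big; apply: eq_bigr => j _.
by rewrite summxE mulr_sumr.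
Qed.

Lemma dotZl a u v : dot (a *: u) v = a * dot u v.
Proof. by rewrite /dot mulr_sumr; apply: eq_bigr => i _; rewrite mxE mulrA. Qed.

Lemma dotZr a u v : dot u (a *: v) = a * dot u v.
Proof. by rewrite /dot mulr_sumr; apply: eq_bigr => i _; rewrite mxE mulrCA. Qed.

Lemma dotNl u v : dot (- u) v = - dot u v.
Proof. by rewrite -scaleN1r dotZl mulN1r. Qed.

Lemma dotBr u v y : dot u (v - y) = dot u v - dot u y.
Proof.
by rewrite /dot -sumrB; apply: eq_bigr => i _; rewrite !mxE mulrBr.
Qed.

Lemma dot_self_gt0 v : v != 0 -> 0 < dot v v.
Proof.
have sq_ge0 i : 0 <= v 0 i * v 0 i by rewrite -expr2 sqr_ge0.
move=> v_neq0; rewrite lt_def sumr_ge0 ?andbT //.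
apply: contra v_neq0 => /eqP /psumr_eq0P v0; apply/eqP/rowP => i.
by apply/eqP; rewrite mxE -sqrf_eq0 expr2 v0.
Qed.

Definition exp_point w : vec := \row_i expR (w 0 i).

Lemma exp_point_nonneg w : nonneg_vec (exp_point w).
Proof. by move=> i; rewrite mxE expR_ge0. Qed.

Lemma monom_exp_point w y : monom (exp_point w) y = expR (dot w y).
Proof.
rewrite /monom /dot expR_sum; apply: eq_bigr => i _.
by rewrite mxE /powR expR_eq0 expRK mulrC.
Qed.

Lemma dot_ma_field_exp_point u w L k n :
  dot u (ma_field L k (exp_point (n%:R *: w))) =
  \sum_(e <- L) k e * dot u (rvec e) * expR (dot w (src e)) ^+ n.
Proof.
rewrite /ma_field dot_sumr; apply: eq_bigr => e _.
by rewrite dotZr monom_exp_point dotZl expRM_natl mulrAC.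
Qed.

Definition flux L k w c u : R :=
  \sum_(e <- L | dot w (src e) == c) k e * dot u (rvec e).

Lemma realizable_flux E Et k : realizable_by E Et -> rates_pos E k ->
  exists2 kt, rates_pos Et kt & forall w c u, flux Et kt w c u = flux E k w c u.
Proof.
move=> EEt k_gt0; have [kt [kt_gt0 same_field]] := EEt k k_gt0.
exists kt => // w c u; apply/eqP; rewrite -subr_eq0; apply/eqP.
pose s := [seq (expR (dot w (src e)), kt e * dot u (rvec e)) | e <- Et] ++
          [seq (expR (dot w (src e)), - (k e * dot u (rvec e))) | e <- E].
have := power_sums_eq0 (s := s) _ (expR c).
rewrite big_cat !big_map /= sumrN /flux.
under eq_bigl => e do rewrite (inj_eq (@expR_inj R)).
under [X in _ - X]eq_bigl => e do rewrite (inj_eq (@expR_inj R)).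
apply=> n; rewrite big_cat !big_map /=.
have := congr1 (dot u) (same_field _ (exp_point_nonneg (n%:R *: w))).
rewrite !dot_ma_field_exp_point => ->.
by rewrite -big_split big1 // => e _; rewrite /= mulNr subrr.
Qed.

Lemma realizable_neg_at_level E Et w u e :
  realizable_by E Et -> uniq E -> e \in E -> dot u (rvec e) < 0 ->
  exists e', [/\ e' \in Et, dot w (src e') = dot w (src e) & dot u (rvec e') < 0].
Proof.
move=> EEt E_uniq eE neg.
have [k k_gt0] := exists_weights_sum_lt0
  (P := fun f => dot w (src f) == dot w (src e)) (f := fun f => dot u (rvec f))
  E_uniq eE (eqxx _) neg.
have [kt kt_gt0 same_flux] := realizable_flux EEt k_gt0.
rewrite -[X in X < 0]/(flux E k w _ u) -same_flux.
move=> /sumr_lt0_witness[e' e'Et /andP[/eqP lvl]].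
by rewrite pmulr_rlt0 ?kt_gt0 // => neg'; exists e'.
Qed.

Lemma realizable_pos_at_level E Et w u e' :
  realizable_by E Et -> e' \in Et -> 0 < dot u (rvec e') ->
  (forall f, f \in Et -> dot w (src f) = dot w (src e') -> 0 <= dot u (rvec f)) ->
  exists e, [/\ e \in E, dot w (src e) = dot w (src e') & 0 < dot u (rvec e)].
Proof.
move=> EEt e'Et pos flat.
have [kt kt_gt0 same_flux] := realizable_flux EEt (k := fun=> 1) (fun _ _ => ltr01).
have term_ge0 f : f \in Et -> dot w (src f) == dot w (src e') ->
    0 <= kt f * dot u (rvec f).
  by move=> fEt /eqP lvl; rewrite mulr_ge0 ?flat ?ltW ?kt_gt0.
have : 0 < flux Et kt w (dot w (src e')) u.
  rewrite /flux big_seq_cond lt_def sumr_ge0 ?andbT => [|f /andP[]]; last exact: term_ge0.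
  rewrite psumr_neq0 => [|f /andP[]]; last exact: term_ge0.
  by apply/hasP; exists e'; rewrite // e'Et eqxx mulr_gt0 ?kt_gt0.
rewrite same_flux => /sumr_gt0_witness[e eE /andP[/eqP lvl]].
by rewrite mul1r => pos'; exists e.
Qed.

Lemma realizable_src_level E Et w e :
  realizable_by E Et -> is_network E -> e \in E ->
  exists2 e', e' \in Et & dot w (src e') = dot w (src e).
Proof.
move=> EEt [_ E_uniq src_neq_tgt _] eE.
have rvec_neq0 : rvec e != 0 by rewrite subr_eq0 eq_sym src_neq_tgt.
have [|e' [e'Et lvl _]] := realizable_neg_at_level w EEt E_uniq eE (u := - rvec e).
  by rewrite dotNl oppr_lt0 dot_self_gt0.
by exists e'.
Qed.

Lemma endotactic_pos_level_below L w e :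
  endotactic L -> e \in L -> dot w (rvec e) < 0 ->
  exists e', [/\ e' \in L, dot w (src e') < dot w (src e), 0 < dot w (rvec e') &
    forall f, f \in L -> dot w (src f) = dot w (src e') -> 0 <= dot w (rvec f)].
Proof.
move=> endoL eL neg.
pose low := [seq f <- L | (dot w (src f) <= dot w (src e)) && (dot w (rvec f) < 0)].
have e_low : e \in low by rewrite mem_filter lexx neg.
have [|m] := exists_argmin_seq (fun f => dot w (src f)) (_ : low != [::]).
  by apply: contraTneq e_low => ->.
rewrite mem_filter => /andP[/andP[m_le m_neg] mL] m_min.
have [e' [e'L + pos]] := endoL w m mL m_neg; rewrite dotBr subr_lt0 => e'_lt_m.
exists e'; split => //; first exact: lt_le_trans m_le.
move=> f fL lvl; rewrite leNgt; apply/negP => f_neg.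
have : dot w (src m) <= dot w (src f).
  by apply: m_min; rewrite mem_filter f_neg fL lvl (ltW (lt_le_trans e'_lt_m m_le)).
by rewrite lvl leNgt e'_lt_m.
Qed.

Lemma strongly_endotactic_pos_min_level L w e :
  strongly_endotactic L -> e \in L -> dot w (rvec e) < 0 ->
  exists e', [/\ e' \in L, dot w (src e') < dot w (src e), 0 < dot w (rvec e'),
    forall f, f \in L -> dot w (src e') <= dot w (src f) &
    forall f, f \in L -> dot w (src f) = dot w (src e') -> 0 <= dot w (rvec f)].
Proof.
move=> sendoL eL neg.
have [e' [e'L + pos e'_min]] := sendoL w e eL neg; rewrite dotBr subr_lt0 => e'_lt_e.
have {}e'_min f : f \in L -> dot w (src e') <= dot w (src f).
  by move/e'_min; rewrite dotBr subr_le0.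
exists e'; split => // f fL lvl; rewrite leNgt; apply/negP => f_neg.
have [g [gL + _ _]] := sendoL w f fL f_neg; rewrite dotBr subr_lt0 lvl => g_lt.
by have := e'_min g gL; rewrite leNgt g_lt.
Qed.

End Networks.

Theorem lemma3 (R : realType) (d : nat) (E Et : seq (edge R d)) :
  is_network E -> is_network Et -> realizable_by E Et ->
  (endotactic Et -> endotactic E) /\
  (strongly_endotactic Et -> strongly_endotactic E).
Proof.
move=> netE _ EEt; have [_ E_uniq _ _] := netE; split.
- move=> endoEt w ei eiE neg.
  have [e1 [e1Et lvl1 neg1]] := realizable_neg_at_level w EEt E_uniq eiE neg.
  have [e' [e'Et below pos flat]] := endotactic_pos_level_below endoEt e1Et neg1.
  have [e2 [e2E lvl2 pos2]] := realizable_pos_at_level EEt e'Et pos flat.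
  by exists e2; rewrite dotBr subr_lt0 lvl2 -lvl1.
- move=> sendoEt w ei eiE neg.
  have [e1 [e1Et lvl1 neg1]] := realizable_neg_at_level w EEt E_uniq eiE neg.
  have [e' [e'Et below pos e'_min flat]] := strongly_endotactic_pos_min_level sendoEt e1Et neg1.
  have [e2 [e2E lvl2 pos2]] := realizable_pos_at_level EEt e'Et pos flat.
  exists e2; split => //; first by rewrite dotBr subr_lt0 lvl2 -lvl1.
  move=> ek ekE; have [ek' ek'Et lvlk] := realizable_src_level w EEt netE ekE.
  by rewrite dotBr subr_le0 lvl2 -lvlk e'_min.
Qed.
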